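(* For the Byzantine-tolerant algorithm described in the context: let $\gamma$ be a degree-stabilized configuration and let $\gamma\xrightarrow{t}\gamma'$ be a transition in which the rule Candidacy? is executed on a node $u\in V_1$ (the set $t$ being arbitrary otherwise). Then, whatever the other moves in $t$ and the behaviour of Byzantine nodes, the probability that $s_u^{\gamma'}=\top$ and $s_v^{\gamma'}=\bot$ for all $v\in N(u)$ is at least $\frac{1}{e(\Delta+1)}$.
   Context: Network and model. $G=(V,E)$ is a finite simple undirected graph; $N(u)$ is the open neighbourhood of $u$, $N[u]=N(u)\cup\{u\}$, $\deg(u)=|N(u)|$, $\Delta=\max_{u\in V}\deg(u)$. Each node holds local variables; a configuration is an assignment of values to all local variables. A rule ''guard $\to$ command'' is enabled on $u$ in $\gamma$ if its guard (a predicate on the variables of $u$ and its neighbours) holds; its command rewrites only $u$'s variables, possibly randomly. A transition $\gamma\xrightarrow{t}\gamma'$ is given by a nonempty set $t$ of moves $(u,r)$ with $r$ enabled on $u$ in $\gamma$, at most one per node, all executed simultaneously from the values in $\gamma$, with independent random choices. Byzantine nodes. A subset $B\subseteq V$ consists of Byzantine nodes, which when activated may set their local variables to arbitrary values. $d(u,B)$ is the graph distance from $u$ to $B$ and $V_i=\{u\in V: d(u,B)>i\}$. Algorithm. Each node $u$ has variables $s_u\in\{\bot,\top\}$ and $x_u\in\mathbb{N}$; $Rand(q)$ returns $1$ with probability $q$, else $0$, independently for each call. Non-Byzantine nodes follow the rules: (Refresh) $x_u\neq \deg(u)\ \to\ x_u:=\deg(u)$. (Candidacy?) $x_u=\deg(u)\wedge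 s_u=\bot\wedge \forall v\in N(u),\ s_v=\bot\ \to$ if $Rand\big(\frac{1}{1+\max\{x_v: v\in N[u]\}}\big)=1$ then $s_u:=\top$. (Withdrawal) $x_u=\deg(u)\wedge s_u=\top\wedge \exists v\in N(u),\ s_v=\top\ \to\ s_u:=\bot$. $\gamma$ is degree-stabilized if $x_u^\gamma=\deg(u)$ for every non-Byzantine node $u$. *)

From HB Require Import structures.
From mathcomp Require Import all_boot all_order all_algebra.
From mathcomp Require Import reals sequences exp.
Set Implicit Arguments. Unset Strict Implicit. Unset Printing Implicit Defensive.
Import Order.TTheory GRing.Theory Num.Theory.

Section Model.
Variables (V : finType) (e : rel V).

Definition nbh (u : V) : {set V} := [set v | e u v].
Definition deg (u : V) : nat := #|nbh u|.
Definition maxdeg : nat := \max_(u : V) deg u.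

(* a configuration: s_u (true = top, false = bot) and x_u *)
Record config := Config { sv : V -> bool; xv : V -> nat }.

Inductive rule := Refresh | Candidacy | Withdrawal.

Definition enabled (g : config) (u : V) (r : rule) : bool :=
  match r with
  | Refresh => xv g u != deg u
  | Candidacy => (xv g u == deg u) && ~~ sv g u && [forall v, e u v ==> ~~ sv g v]
  | Withdrawal => (xv g u == deg u) && sv g u && [exists v, e u v && sv g v]
  end.

Definition degree_stabilized (B : {set V}) (g : config) : Prop :=
  forall u, u \notin B -> xv g u = deg u.

(* V_1 = { u | d(u,B) > 1 }: u is not Byzantine and has no Byzantine neighbour
   (d(u,B) = +oo > 1 when no Byzantine node is reachable). *)
Definition in_V1 (B : {set V}) (u : V) : bool :=
  (u \notin B) && [forall v, e u v ==> (v \notin B)].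

(* A set of moves t, encoded as t : V -> option rule (at most one move per node). *)
Definition valid_moves (B : {set V}) (g : config) (t : V -> option rule) : Prop :=
  (exists v, isSome (t v)) /\
  (forall v r, v \notin B -> t v = Some r -> enabled g v r).

Local Open Scope ring_scope.

(* probability parameter of Rand in Candidacy? on node u:
   1 / (1 + max { x_v : v in N[u] }) *)
Definition cand_max (g : config) (u : V) : nat :=
  (\max_(v | (v == u) || e u v) xv g v)%N.

Definition cand_prob (R : realType) (g : config) (u : V) : R :=
  (1 + (cand_max g u)%:R)^-1.

(* Result of the transition given the vector of random bits c (c v is the
   outcome of Rand on node v; only used if v executes Candidacy?) and the
   Byzantine behaviour byz (new values of an activated Byzantine node,
   possibly depending on the random bits). *)
Definition step (B : {set V}) (g : config) (t : V -> option rule)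
  (byz : {ffun V -> bool} -> V -> bool * nat) (c : {ffun V -> bool}) : config :=
  Config
    (fun v => if v \in B then (if t v is Some _ then (byz c v).1 else sv g v)
              else match t v with
                   | None => sv g v
                   | Some Refresh => sv g v
                   | Some Candidacy => if c v then true else sv g v
                   | Some Withdrawal => false
                   end)
    (fun v => if v \in B then (if t v is Some _ then (byz c v).2 else xv g v)
              else match t v with
                   | Some Refresh => deg v
                   | _ => xv g v
                   end).

(* probability weight of a vector of independent random bits, bit v being 1
   with probability cand_prob g v *)
Definition weight (R : realType) (g : config) (c : {ffun V -> bool}) : R :=
  \prod_(v : V) (if c v then cand_prob R g v else 1 - cand_prob R g v).

Definition prob_event (R : realType) (B : {set V}) (g : config)
  (t : V -> option rule) (byz : {ffun V -> bool} -> V -> bool * nat)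
  (E : config -> bool) : R :=
  \sum_(c : {ffun V -> bool} | E (step B g t byz c)) weight R g c.

End Model.

From HB Require Import structures.
From mathcomp Require Import all_boot all_order all_algebra.
From mathcomp Require Import reals sequences exp.
From mathcomp Require Import ring.
Import Order.TTheory GRing.Theory Num.Theory.
Local Open Scope ring_scope.

(* The random bits are independent, so the event "u draws 1 and every neighbour
   of u draws 0" has probability p_u * prod_{v ~ u} (1 - p_v).  Since the
   configuration is degree-stabilized and u has no Byzantine neighbour,
   p_u >= 1/(Delta+1) and p_v <= 1/(deg u + 1) for each neighbour v (as u lies
   in N[v]); the product is then at least (1 - 1/(d+1))^d >= 1/e with
   d = deg u.  This event forces s_u = T and s_v = F on the neighbours, whatever
   the other moves and the Byzantine nodes do. *)

Lemma ler_sum_subpred (R : numDomainType) (I : finType) (P Q : pred I)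
    (F : I -> R) :
  (forall i, P i -> Q i) -> (forall i, 0 <= F i) ->
  \sum_(i | P i) F i <= \sum_(i | Q i) F i.
Proof.
move=> PQ F0; rewrite [X in _ <= X](bigID P) /=.
rewrite (eq_bigl P) ?lerDl ?sumr_ge0 // => i.
by apply/andP/idP => [[]|Pi] //; rewrite PQ.
Qed.

Lemma expr_card_le_prod (R : numDomainType) (I : finType) (A : {pred I})
    (F : I -> R) (a : R) :
  (forall i, i \in A -> 0 <= a <= F i) -> a ^+ #|A| <= \prod_(i in A) F i.
Proof. by move=> aF; rewrite -prodr_const; apply: ler_prod. Qed.

Lemma invexpR1_le_pow (R : realType) (d : nat) :
  (expR 1 : R)^-1 <= (1 - (1 + d%:R)^-1) ^+ d.
Proof.
case: d => [|d].
  by rewrite expr0 invf_le1 ?expR_gt0 // (le_trans _ (expR_ge1Dx 1)) ?lerDl.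
set n : R := d.+1%:R; have n_gt0 : 0 < n by rewrite ltr0n.
have -> : 1 - (1 + n)^-1 = (1 + n^-1)^-1.
  have n_neq0 : n != 0 by rewrite gt_eqF.
  have n1_neq0 : 1 + n != 0 by rewrite gt_eqF // addr_gt0.
  by clearbody n; field; rewrite n_neq0 addrC n1_neq0.
have -> : (expR 1 : R)^-1 = ((expR n^-1)^-1) ^+ d.+1.
  by rewrite exprVn -expRM_natl mulfV ?gt_eqF.
have n_inv_gt0 : 0 < n^-1 by rewrite invr_gt0.
apply: lerXn2r; rewrite ?nnegrE ?invr_ge0 ?expR_ge0 ?addr_ge0 ?(ltW n_inv_gt0) //.
by rewrite lef_pV2 ?posrE ?expR_gt0 ?addr_gt0 ?expR_ge1Dx.
Qed.

Section Isolation.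
Context {V : finType} (e : rel V).
Hypothesis e_irr : irreflexive e.

Definition isolating (u v : V) : pred bool :=
  fun b => if v == u then b else if e u v then ~~ b else true.

Lemma prod_isolating (R : comPzRingType) (p : V -> R) (u : V) :
  \prod_v \sum_(b | isolating u v b) (if b then p v else 1 - p v) =
  p u * \prod_(v | e u v) (1 - p v).
Proof.
rewrite (bigD1 u) //=; congr (_ * _).
  by rewrite big_mkcond big_bool /isolating eqxx /= addr0.
rewrite [LHS]big_mkcond [RHS]big_mkcond; apply: eq_bigr => v _.
have [->|/negbTE vu] := eqVneq v u; first by rewrite e_irr.
rewrite big_mkcond big_bool /isolating vu /=.
by case: (e u v); rewrite /= ?add0r ?addr0 // addrC subrK.
Qed.

Lemma step_isolating (B : {set V}) (g : config V) (t : V -> option rule)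
    (byz : {ffun V -> bool} -> V -> bool * nat) (u : V)
    (c : {ffun V -> bool}) :
  in_V1 e B u -> t u = Some Candidacy ->
  (forall v, e u v -> ~~ sv g v) -> c \in family (isolating u) ->
  sv (step e B g t byz c) u && [forall v, e u v ==> ~~ sv (step e B g t byz c) v].
Proof.
move=> /andP[uB /forallP nbB] tu nb_bot /familyP c_iso.
have := c_iso u; rewrite unfold_in /isolating eqxx /= (negbTE uB) tu => -> /=.
apply/forallP => v; apply/implyP => euv.
have := c_iso v; rewrite unfold_in /isolating euv.
have -> : (v == u) = false by apply: contraTF euv => /eqP->; rewrite e_irr.
rewrite (negbTE (implyP (nbB v) euv)) => /negbTE cv.
by case: (t v) => [[]|] //=; rewrite ?cv; apply: nb_bot.
Qed.

End Isolation.

Section CandidacyProbability.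
Context {R : realType} {V : finType} {e : rel V} {g : config V}.

Lemma cand_prob_gt0 (v : V) : 0 < cand_prob e R g v.
Proof. by rewrite invr_gt0 ltr_wpDr. Qed.

Lemma cand_prob_le1 (v : V) : cand_prob e R g v <= 1.
Proof. by rewrite invf_le1 ?ltr_wpDr // lerDl. Qed.

Lemma cand_prob_ge (v : V) (k : nat) :
  (cand_max e g v <= k)%N -> (1 + k%:R)^-1 <= cand_prob e R g v.
Proof. by move=> le_k; rewrite lef_pV2 ?posrE ?ltr_wpDr // lerD2l ler_nat. Qed.

Lemma cand_prob_le (v : V) (k : nat) :
  (k <= cand_max e g v)%N -> cand_prob e R g v <= (1 + k%:R)^-1.
Proof. by move=> le_k; rewrite lef_pV2 ?posrE ?ltr_wpDr // lerD2l ler_nat. Qed.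

Context {B : {set V}} (g_stab : degree_stabilized e B g).

Lemma cand_max_le_maxdeg (u : V) : in_V1 e B u -> (cand_max e g u <= maxdeg e)%N.
Proof.
move=> /andP[uB /forallP nbB]; apply/bigmax_leqP => w /orP[/eqP->|euw].
  by rewrite g_stab //; apply: leq_bigmax.
by rewrite g_stab ?(implyP (nbB w) euw) //; apply: leq_bigmax.
Qed.

Lemma deg_le_cand_max (u v : V) : u \notin B -> e v u -> (deg e u <= cand_max e g v)%N.
Proof.
by move=> uB evu; rewrite -(g_stab _ uB); apply: (leq_bigmax_cond (F := xv g)); rewrite evu orbT.
Qed.

End CandidacyProbability.

Lemma prob_event_ge_family {R : realType} {V : finType} {e : rel V}
    {B : {set V}} {g : config V} {t : V -> option rule}
    {byz : {ffun V -> bool} -> V -> bool * nat} (Q : V -> pred bool)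
    {E : config V -> bool} :
  (forall c, c \in family Q -> E (step e B g t byz c)) ->
  \prod_v \sum_(b | Q v b) (if b then cand_prob e R g v else 1 - cand_prob e R g v)
    <= prob_event e R B g t byz E.
Proof.
move=> QE; rewrite bigA_distr_big_dep; apply: ler_sum_subpred => // c.
apply: prodr_ge0 => v _; case: (c v).
  exact/ltW/cand_prob_gt0.
by rewrite subr_ge0 cand_prob_le1.
Qed.

Theorem mainTheorem8 (R : realType) (V : finType) (e : rel V)
  (e_sym : symmetric e) (e_irr : irreflexive e)
  (B : {set V}) (g : config V) (t : V -> option rule)
  (byz : {ffun V -> bool} -> V -> bool * nat) (u : V) :
  valid_moves e B g t ->
  degree_stabilized e B g ->
  t u = Some Candidacy ->
  in_V1 e B u ->
  (expR 1 * ((maxdeg e)%:R + 1))^-1 <=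
    prob_event e R B g t byz
      (fun g' => sv g' u && [forall v, e u v ==> ~~ sv g' v]).
Proof.
move=> [_ enabled_moves] g_stab tu uV1.
have uB : u \notin B by case/andP: uV1.
have /andP[_ /forallP nb_bot] := enabled_moves u Candidacy uB tu.
have isolated_event c : c \in family (isolating e u) ->
    sv (step e B g t byz c) u && [forall v, e u v ==> ~~ sv (step e B g t byz c) v].
  by apply: step_isolating => // v; apply/implyP/nb_bot.
apply: le_trans (prob_event_ge_family _ isolated_event).
rewrite prod_isolating // invfM mulrC addrC.
apply: ler_pM; rewrite ?invr_ge0 ?expR_ge0 ?addr_ge0 //.
  exact/cand_prob_ge/(cand_max_le_maxdeg g_stab).
apply: le_trans (invexpR1_le_pow R (deg e u)) _.
rewrite (eq_bigl (mem (nbh e u))); last by move=> v /=; rewrite inE.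
apply: expr_card_le_prod => v; rewrite inE => euv; apply/andP; split.
  by rewrite subr_ge0 invf_le1 ?ltr_wpDr // lerDl.
by rewrite lerD2l lerN2; apply/cand_prob_le/(deg_le_cand_max g_stab); rewrite // e_sym.
Qed.
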